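(* Let $T:[0,1]\to[0,1]$ be a uniform-distribution-preserving transformation that is continuously differentiable on an interval $(a,b)\subset[0,1]$. Then $T'(x)\neq0$ for all $x\in(a,b)$ and $T$ is strictly monotone on $(a,b)$.
   Context: $T$ is uniform-distribution-preserving if $T(U)\sim\mathcal{U}(0,1)$ whenever $U\sim\mathcal{U}(0,1)$. *)

From HB Require Import structures.
From mathcomp Require Import all_boot all_order all_algebra.
From mathcomp Require Import all_classical all_reals all_analysis.
Set Implicit Arguments. Unset Strict Implicit. Unset Printing Implicit Defensive.
Import Order.TTheory GRing.Theory Num.Theory.
Import numFieldNormedType.Exports.
Local Open Scope classical_set_scope.
Local Open Scope ring_scope.

(* T : [0,1] -> [0,1] is represented by T : R -> R mapping [0,1] into [0,1];
   values outside [0,1] are irrelevant.  T is uniform-distribution-preserving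
   iff T is (Borel) measurable on [0,1] (so T(U) is a random variable) and the
   law of T(U), U ~ U(0,1) (i.e. Lebesgue measure restricted to [0,1]),
   equals U(0,1):  P(T(U) \in B) = lambda({x in [0,1] | T x \in B})
                               = lambda(B `&` [0,1]) for every Borel B. *)
Definition unif_preserving (R : realType) (T : R -> R) : Prop :=
  measurable_fun (`[0%R, 1%R] : set R) (T : R -> R) /\
  forall B : set R, measurable B ->
    (@lebesgue_measure R) ((`[0%R, 1%R] : set R) `&` T @^-1` B) =
    (@lebesgue_measure R) ((`[0%R, 1%R] : set R) `&` B).

From HB Require Import structures.
From mathcomp Require Import all_boot all_order all_algebra.
From mathcomp Require Import all_classical all_reals all_analysis.
From mathcomp Require Import lra.
Import Order.TTheory GRing.Theory Num.Theory.
Import numFieldNormedType.Exports.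
Local Open Scope classical_set_scope.
Local Open Scope ring_scope.

(* If T' vanished at some x0 then, T' being continuous, |T'| < 1/4 on a
   neighbourhood ]x0 - d, x0 + d[ of x0, so by the mean value theorem T maps
   this interval of length 2d into an interval of length d/2; measure
   preservation forbids this.  Hence T' has no zero on ]a, b[, so by the
   intermediate value theorem it has constant sign there and T is strictly
   monotone. *)

Lemma lipschitz_of_derive1_bound (R : realType) (f : R -> R) (k p q : R) :
  p <= q -> (forall t, p <= t <= q -> derivable f t 1 /\ `|derive1 f t| <= k) ->
  `|f q - f p| <= k * (q - p).
Proof.
move=> pq hf.
have df t : t \in `[p, q] -> derivable f t 1.
  by rewrite in_itv => /hf[].
have [c cpq ->] := MVT_segment pq
  (fun t tpq => derivableP (df t (subset_itv_oo_cc tpq)))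
  (derivable_within_continuous df).
rewrite normrM (ger0_norm (_ : 0 <= q - p)) ?ler_wpM2r ?subr_ge0 //.
by move: cpq; rewrite in_itv /= => /hf[_]; rewrite derive1E.
Qed.

Lemma unif_preserving_measure_le {R : realType} {T : R -> R} {A B : set R} :
  unif_preserving T -> measurable A -> measurable B ->
  A `<=` (`[0, 1] : set R) -> A `<=` T @^-1` B ->
  (lebesgue_measure A <= lebesgue_measure B)%E.
Proof.
move=> [mT preserve] mA mB A01 AB.
apply: (@le_trans _ _ (lebesgue_measure ((`[0, 1] : set R) `&` T @^-1` B))).
  apply: le_measure; rewrite ?inE //; first exact: mT.
  by move=> x Ax; split; [exact: A01 | exact: AB].
by rewrite preserve //; apply: le_measure; rewrite ?inE //; apply: measurableI.
Qed.

Lemma unif_preserving_derive1_neq0 {R : realType} {T : R -> R} {x0 : R} :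
  unif_preserving T -> 0 < x0 < 1 ->
  (\forall x \near x0, derivable T x 1) -> {for x0, continuous (derive1 T)} ->
  derive1 T x0 != 0.
Proof.
move=> hT x01 dT cT'; apply/negP => /eqP T'x0.
have : \forall x \near x0,
    [/\ x \in `]0, 1[, derivable T x 1 & `|derive1 T x| < 4^-1].
  near=> x; split.
  - by near: x; apply: near_in_itvoo; rewrite in_itv.
  - by near: x; exact: dT.
  - near: x; move/cvgrPdist_lt : cT' => /(_ 4^-1 ltac:(by [])).
    by apply: filterS => x; rewrite T'x0 sub0r normrN.
case/nbhs_ballP => d /= d_gt0 near_x0.
have {}near_x0 x : x0 - d < x < x0 + d ->
    [/\ 0 < x < 1, derivable T x 1 & `|derive1 T x| < 4^-1].
  move=> /andP[xl xr]; have [] := near_x0 x; last by rewrite in_itv.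
  by rewrite /ball /= ltr_norml; apply/andP; split; lra.
have T_lip p q : x0 - d < p -> p <= q -> q < x0 + d ->
    `|T q - T p| <= 4^-1 * (q - p).
  move=> dp pq qd; apply: lipschitz_of_derive1_bound => // t /andP[pt tq].
  by have [_ ? /ltW] := near_x0 t ltac:(apply/andP; split; lra).
have I01 : [set` `]x0 - d, x0 + d[] `<=` (`[0, 1] : set R).
  move=> x /=; rewrite !in_itv /= => /near_x0[/andP[x_gt0 x_lt1] _ _].
  by rewrite !ltW.
have T_I : [set` `]x0 - d, x0 + d[] `<=`
    T @^-1` [set` `]T x0 - d / 4, T x0 + d / 4[].
  move=> x /=; rewrite !in_itv /= => /andP[xl xr].
  have [xx0|x0x] := leP x x0.
    by have := T_lip x x0 xl xx0 ltac:(lra); rewrite ler_norml => /andP[]; lra.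
  by have := T_lip x0 x ltac:(lra) (ltW x0x) xr; rewrite ler_norml => /andP[]; lra.
have := unif_preserving_measure_le hT
  (measurable_itv _) (measurable_itv _) I01 T_I.
rewrite !lebesgue_measure_itv /= !lte_fin !ifT; [|lra|lra].
by rewrite -!EFinD lee_fin; lra.
Unshelve. all: by end_near.
Qed.

Lemma continuous_neq0_sign {R : realType} {g : R -> R} {a b : R} :
  a < b -> {in `]a, b[, continuous g} -> {in `]a, b[, forall x, g x != 0} ->
  {in `]a, b[, forall x, 0 < g x} \/ {in `]a, b[, forall x, g x < 0}.
Proof.
move=> ab cg g_neq0.
have same_sign p q : p \in `]a, b[ -> q \in `]a, b[ -> 0 < g p * g q.
  wlog pq : p q / p <= q.
    move=> wlog_pq pab qab; have [pq|/ltW qp] := leP p q; first exact: wlog_pq.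
    by rewrite mulrC; exact: wlog_pq.
  move=> pab qab; rewrite ltNge; apply/negP => prod_le0.
  have pq_ab x : p <= x <= q -> x \in `]a, b[.
    by move: pab qab; rewrite !in_itv /= => /andP[? ?] /andP[? ?] /andP[? ?]; lra.
  have [||c cpq gc0] := @IVT R g p q 0 pq.
  - apply: continuous_in_subspaceT => x; rewrite inE /= in_itv /= => xpq.
    exact/cg/pq_ab.
  - rewrite ge_min le_max; have [gp_gt0|gp_le0] := ltP 0 (g p).
      by rewrite (ltW gp_gt0) /= andbT -(pmulr_rle0 _ gp_gt0).
    have gp_lt0 : g p < 0 by rewrite lt_neqAle gp_le0 andbT g_neq0.
    by rewrite andTb -(nmulr_rle0 (g q) gp_lt0) prod_le0 orbT.
  - by move: cpq; rewrite in_itv /= => /pq_ab/g_neq0; rewrite gc0 eqxx.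
have mab : (a + b) / 2 \in `]a, b[ by rewrite in_itv /=; apply/andP; split; lra.
have [gm_gt0|gm_le0] := ltP 0 (g ((a + b) / 2)).
  by left => x xab; rewrite -(pmulr_rgt0 _ gm_gt0) same_sign.
have gm_lt0 : g ((a + b) / 2) < 0 by rewrite lt_neqAle gm_le0 andbT g_neq0.
by right => x xab; rewrite -(nmulr_rgt0 _ gm_lt0) same_sign.
Qed.

Theorem lemmaB1 (R : realType) (T : R -> R) (a b : R) :
  (forall x, 0 <= x <= 1 -> 0 <= T x <= 1) ->
  unif_preserving T ->
  0 <= a -> a < b -> b <= 1 ->
  (forall x, a < x < b -> derivable T x 1 /\ {for x, continuous (derive1 T)}) ->
  (forall x, a < x < b -> derive1 T x != 0) /\
  ({in `]a, b[ &, forall x y, x < y -> T x < T y} \/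
   {in `]a, b[ &, forall x y, x < y -> T y < T x}).
Proof.
move=> _ hT a_ge0 ab b_le1 hd.
have dT : {in `]a, b[, forall x, derivable T x 1}.
  by move=> x; rewrite in_itv => /hd[].
have cT' : {in `]a, b[, continuous (derive1 T)}.
  by move=> x; rewrite in_itv => /hd[].
have T'_neq0 : {in `]a, b[, forall x, derive1 T x != 0}.
  move=> x xab; apply: unif_preserving_derive1_neq0 hT _ _ (cT' x xab).
    by move: xab; rewrite in_itv /= => /andP[? ?]; apply/andP; split; lra.
  by near=> y; apply: dT; near: y; exact: near_in_itvoo.
split=> [x xab|]; first by apply: T'_neq0; rewrite in_itv.
have cT : {in `]a, b[%classic, continuous T}.
  by move=> x /set_mem/dT/derivable1_diffP/differentiable_continuous.
have [T'_gt0|T'_lt0] := continuous_neq0_sign ab cT' T'_neq0.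
- by left; exact: gtr0_derive1_lt_oo.
- right=> x y xab yab xy; exact: (ltr0_derive1_lt_oo dT T'_lt0 cT).
Unshelve. all: by end_near.
Qed.
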